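(* Let $n\ge 4$ and $R=\mathbb{C}[z_1,\dots,z_n]$. Then there exist an integer $m$, an integer $P<n$, and homogeneous polynomials $f_1,\dots,f_P,g\in R$ of degree $m$ with $\{f_1,\dots,f_P,g\}$ linearly independent over $\mathbb{C}$, such that, with $I^+=\langle f_1,\dots,f_P\rangle$, one has $\langle g\rangle_{m+1}\subseteq I^+_{m+1}$.
   Context: For a homogeneous ideal $I\subseteq R$, $I_{d}$ denotes its homogeneous component of degree $d$. *)

From HB Require Import structures.
From mathcomp Require Import all_boot all_algebra.
From mathcomp Require Import complex.
From mathcomp Require Import Rstruct.
From mathcomp Require Import mpoly.
Set Implicit Arguments. Unset Strict Implicit. Unset Printing Implicit Defensive.
Import GRing.Theory.
Local Open Scope ring_scope.
Local Open Scope complex_scope.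

Definition CC : fieldType := (Rdefinitions.R)[i].

Definition in_ideal (n P : nat) (f : 'I_P -> {mpoly CC[n]}) (p : {mpoly CC[n]}) : Prop :=
  exists c : 'I_P -> {mpoly CC[n]}, p = \sum_(i < P) c i * f i.

Definition in_principal (n : nat) (g p : {mpoly CC[n]}) : Prop :=
  exists c : {mpoly CC[n]}, p = c * g.

Definition hcomp (n : nat) (I : {mpoly CC[n]} -> Prop) (d : nat) (p : {mpoly CC[n]}) : Prop :=
  I p /\ p \is d.-homog.

Definition lin_indep (n P : nat) (f : 'I_P -> {mpoly CC[n]}) (g : {mpoly CC[n]}) : Prop :=
  forall (a : 'I_P -> CC) (b : CC),
    \sum_(i < P) a i *: f i + b *: g = 0 -> (forall i, a i = 0) /\ b = 0.

From HB Require Import structures.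
From mathcomp Require Import all_boot all_algebra.
From mathcomp Require Import mpoly zify ring.
Import GRing.Theory.
Local Open Scope ring_scope.

(* Take g = x0 x3 and the n - 1 quadrics x0 x2, x1 x3, x0 x3 + x1 x2 and
   x0 xk (4 <= k < n).  Each quadric has a monomial occurring in no other one
   nor in g, which gives linear independence.  Yet every xj g lies in the
   ideal I+ they generate:
     x0 g = x0 (x0 x3 + x1 x2) - x1 (x0 x2),
     x3 g = x3 (x0 x3 + x1 x2) - x2 (x1 x3),
   while x1 g, x2 g and xk g are multiples of x1 x3, x0 x2 and x0 xk.
   A cubic c g has a multiplier c without constant term, so it lies in I+. *)

Section IdealMembership.
Variables (n P : nat) (f : 'I_P -> {mpoly CC[n]}).

Lemma in_ideal0 : in_ideal f 0.
Proof. by exists (fun=> 0); rewrite big1 // => i _; rewrite mul0r. Qed.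

Lemma in_idealD p q : in_ideal f p -> in_ideal f q -> in_ideal f (p + q).
Proof.
move=> [c ->] [d ->]; exists (fun i => c i + d i).
by rewrite -big_split; apply: eq_bigr => i _; rewrite mulrDl.
Qed.

Lemma in_idealMl q p : in_ideal f p -> in_ideal f (q * p).
Proof.
move=> [c ->]; exists (fun i => q * c i).
by rewrite mulr_sumr; apply: eq_bigr => i _; rewrite mulrA.
Qed.

Lemma in_ideal_mulgen q i : in_ideal f (q * f i).
Proof.
apply: in_idealMl; exists (fun j => (j == i)%:R).
by rewrite (bigD1 i) //= eqxx mul1r big1 ?addr0 // => j /negbTE->; rewrite mul0r.
Qed.

Lemma in_ideal_mul_mcoeff0 (g c : {mpoly CC[n]}) :
  (forall j, in_ideal f ('X_j * g)) -> c@_0%MM = 0 -> in_ideal f (c * g).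
Proof.
move=> Xg_in c0; rewrite (mpolyE c) mulr_suml.
apply: big_ind => [||m _]; [exact: in_ideal0 | exact: in_idealD |].
have [->|/eqP m_neq0] := eqVneq m 0%MM; first by rewrite c0 scale0r mul0r; apply: in_ideal0.
have [j m_j] : exists j, m j != 0%N.
  case: (pickP (fun j => m j != 0%N)) => [j m_j | m_eq0]; first by exists j.
  by case: m_neq0; apply/mnmP => j; rewrite mnm0E; apply/eqP/negbFE/m_eq0.
rewrite -(submK (_ : U_(j) <= m)%MM) ?lep1mP // mpolyXD.
by rewrite -scalerAl -mulrA scalerAl; apply: in_idealMl.
Qed.

End IdealMembership.

Lemma mcoeff0_eq0_of_dhomog_mulX {R : nzRingType} {n} {c : {mpoly R[n]}} {mu d} :
  c * 'X_[mu] \is d.-homog -> mdeg mu != d -> c@_0%MM = 0.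
Proof. by move=> c_homog mu_d; rewrite -(mcoeffMX c mu) addm0 (dhomog_nemf_coeff c_homog). Qed.

Lemma lin_indep_of_mcoeff {n P} {f : 'I_P -> {mpoly CC[n]}} {g : {mpoly CC[n]}}
    {mu : 'I_P -> 'X_{1..n}} (nu : 'X_{1..n}) :
  (forall i k, (f i)@_(mu k) = (i == k)%:R) -> (forall k, g@_(mu k) = 0) ->
  g@_nu != 0 -> lin_indep f g.
Proof.
move=> f_mu g_mu g_nu a b comb0.
have a0 k : a k = 0.
  have := congr1 (mcoeff (mu k)) comb0.
  rewrite mcoeffD mcoeffZ g_mu mulr0 addr0 mcoeff0 raddf_sum /= => <-.
  rewrite (eq_bigr (fun i => a i * (i == k)%:R)) => [|i _]; last by rewrite mcoeffZ f_mu.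
  by rewrite (bigD1 k) // eqxx mulr1 big1 => [|i /negbTE->]; rewrite /= ?addr0 ?mulr0.
split=> //; move: comb0.
rewrite big1 => [|i _]; last by rewrite a0 scale0r.
move/(congr1 (mcoeff nu)); rewrite add0r mcoeffZ mcoeff0 => /eqP.
by rewrite mulf_eq0 (negbTE g_nu) orbF => /eqP.
Qed.

Lemma eq_mnm_pair n (a b c d : 'I_n) :
  ((U_(a) + U_(b))%MM == (U_(c) + U_(d))%MM) =
  ((a == c) && (b == d)) || ((a == d) && (b == c)).
Proof.
apply/eqP/idP => [/mnmP eq_abcd | /orP[] /andP[/eqP-> /eqP->] //]; last exact: addmC.
have mult j : ((a == j) + (b == j) = (c == j) + (d == j))%N.
  by have := eq_abcd j; rewrite !mnmDE !mnm1E.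
move: (mult a) (mult b) (mult c) (mult d); rewrite -!val_eqE /= !eqxx.
by do 6 (case: eqP => ? //=); lia.
Qed.

Section Example.
Variable n : nat.

Local Notation N := n.+4.
Local Notation x k := ('X_(inord k) : {mpoly CC[N]}).
Local Notation e k := (U_(inord k) : 'X_{1..N})%MM.

Definition fgen (i : 'I_n.+3) : {mpoly CC[N]} :=
  match nat_of_ord i with
  | 0 => x 0 * x 2 | 1 => x 1 * x 3 | 2 => x 0 * x 3 + x 1 * x 2
  | k.+3 => x 0 * x k.+4
  end.

Definition ggen : {mpoly CC[N]} := x 0 * x 3.

Definition fgen_mono (i : 'I_n.+3) : 'X_{1..N} :=
  match nat_of_ord i with
  | 0 => e 0 + e 2 | 1 => e 1 + e 3 | 2 => e 1 + e 2
  | k.+3 => e 0 + e k.+4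
  end.

Lemma mulx a b : x a * x b = 'X_[e a + e b].
Proof. by rewrite mpolyXD. Qed.

Lemma mcoeff_mulx a b c d : (a < N)%N -> (b < N)%N -> (c < N)%N -> (d < N)%N ->
  (x a * x b)@_(e c + e d) = ((a == c) && (b == d) || (a == d) && (b == c))%:R.
Proof.
by move=> *; rewrite mulx mcoeffX eq_mnm_pair -!val_eqE /= !inordK.
Qed.

Lemma mulx_homog a b : x a * x b \is 2.-homog.
Proof. by rewrite mulx dhomogX /= mdegD !mdeg1. Qed.

Lemma fgen_homog i : fgen i \is 2.-homog.
Proof.
case: i => [[|[|[|i]]] lt_i]; rewrite /fgen /=; try exact: mulx_homog.
by apply: dhomogD; apply: mulx_homog.
Qed.

Lemma mcoeff_fgen i k : (fgen i)@_(fgen_mono k) = (i == k)%:R.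
Proof.
case: i k => [[|[|[|i]]] lt_i] [[|[|[|k]]] lt_k];
  rewrite /fgen /fgen_mono /= ?mcoeffD !mcoeff_mulx //=; try lia.
all: by rewrite ?mulr0n ?mulr1n ?addr0 ?add0r ?orbF.
Qed.

Lemma mcoeff_ggen k : ggen@_(fgen_mono k) = 0.
Proof. by case: k => [[|[|[|k]]] lt_k]; rewrite /fgen_mono /= mcoeff_mulx //=; lia. Qed.

Lemma lin_indep_fgen_ggen : lin_indep fgen ggen.
Proof.
apply: (lin_indep_of_mcoeff (e 0 + e 3) mcoeff_fgen mcoeff_ggen).
by rewrite mcoeff_mulx //= oner_neq0.
Qed.

Lemma X_mul_ggen_in_ideal (j : 'I_N) : in_ideal fgen ('X_j * ggen).
Proof.
rewrite -[j]inord_val; case: j => [[|[|[|[|k]]]] lt_k] /=.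
- have -> : x 0 * ggen = x 0 * fgen (Ordinal (isT : (2 < n.+3)%N))
                         + - x 1 * fgen (Ordinal (isT : (0 < n.+3)%N)).
    by rewrite /fgen /ggen /=; ring.
  by apply: in_idealD; apply: in_ideal_mulgen.
- have -> : x 1 * ggen = x 0 * fgen (Ordinal (isT : (1 < n.+3)%N)).
    by rewrite /fgen /ggen /=; ring.
  exact: in_ideal_mulgen.
- have -> : x 2 * ggen = x 3 * fgen (Ordinal (isT : (0 < n.+3)%N)).
    by rewrite /fgen /ggen /=; ring.
  exact: in_ideal_mulgen.
- have -> : x 3 * ggen = x 3 * fgen (Ordinal (isT : (2 < n.+3)%N))
                         + - x 2 * fgen (Ordinal (isT : (1 < n.+3)%N)).
    by rewrite /fgen /ggen /=; ring.
  by apply: in_idealD; apply: in_ideal_mulgen.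
- have -> : x k.+4 * ggen = x 3 * fgen (Ordinal (lt_k : (k.+3 < n.+3)%N)).
    by rewrite /fgen /ggen /=; ring.
  exact: in_ideal_mulgen.
Qed.

Lemma cubic_multiple_ggen_in_ideal p :
  hcomp (in_principal ggen) 3 p -> hcomp (in_ideal fgen) 3 p.
Proof.
move=> [[c ->] c_homog]; split=> //.
apply: in_ideal_mul_mcoeff0; first exact: X_mul_ggen_in_ideal.
rewrite /ggen mulx in c_homog.
by apply: (mcoeff0_eq0_of_dhomog_mulX c_homog); rewrite mdegD !mdeg1.
Qed.

End Example.

Theorem proposition3 (n : nat) (hn : (4 <= n)%N) :
  exists (m P : nat) (f : 'I_P -> {mpoly CC[n]}) (g : {mpoly CC[n]}),
    [/\ (P < n)%N,
        (forall i, f i \is m.-homog),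
        g \is m.-homog,
        lin_indep f g &
        forall p, hcomp (in_principal g) m.+1 p -> hcomp (in_ideal f) m.+1 p].
Proof.
case: n hn => [|[|[|[|n]]]] // _.
exists 2%N, n.+3, (@fgen n), (ggen n); split=> //.
- exact: fgen_homog.
- exact: mulx_homog.
- exact: lin_indep_fgen_ggen.
- exact: cubic_multiple_ggen_in_ideal.
Qed.
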